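(* Let $n$ be a positive integer and $\lambda$ an infinite cardinal. For every $d$-feebly compact shift-continuous $T_1$-topology $\tau$ on the semilattice $\exp_n\lambda$, the subset $\exp_n\lambda\setminus\exp_{n-1}\lambda$ is dense in $(\exp_n\lambda,\tau)$.
   Context: For a positive integer $n$ and a cardinal $\lambda$, $\exp_n\lambda=\{A\subseteq\lambda\colon |A|\leqslant n\}$, regarded as a semilattice under the operation $\cap$ (so $\exp_0\lambda=\{\varnothing\}$). A topology $\tau$ on a semilattice $S$ is shift-continuous if the semilattice operation $S\times S\to S$ is separately continuous, i.e. $(S,\tau)$ is a semitopological semilattice. A topological space is $d$-feebly compact if every discrete family of open subsets of it is finite. *)

From HB Require Import structures.
From mathcomp Require Import all_boot.
From mathcomp Require Import finmap.
From mathcomp Require Import boolp classical_sets cardinality.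
Set Implicit Arguments. Unset Strict Implicit. Unset Printing Implicit Defensive.

Local Open Scope fset_scope.

Definition exp_set (L : choiceType) (n : nat) := {A : {fset L} | (#|` A| <= n)%N}.

Lemma exp_meet_proof (L : choiceType) (n : nat) (A B : exp_set L n) :
  (#|` (val A `&` val B)| <= n)%N.
Proof.
apply: leq_trans (fsubset_leq_card (fsubsetIl _ _)) _; exact: (proj2_sig A).
Qed.

Definition exp_meet (L : choiceType) (n : nat) (A B : exp_set L n) : exp_set L n :=
  exist _ (val A `&` val B) (exp_meet_proof A B).

Definition is_topology (X : Type) (O : set (set X)) : Prop :=
  O setT /\ O set0 /\
  (forall F : set (set X), (forall U, F U -> O U) -> O (fun x => exists2 U, F U & U x)) /\
  (forall U V, O U -> O V -> O (fun x => U x /\ V x)).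

Definition T1_top (X : Type) (O : set (set X)) : Prop :=
  forall x y : X, x <> y -> exists U, O U /\ U x /\ ~ U y.

Definition continuous_top (X : Type) (O : set (set X)) (f : X -> X) : Prop :=
  forall U, O U -> O (fun x => U (f x)).

Definition shift_continuous (X : Type) (m : X -> X -> X) (O : set (set X)) : Prop :=
  forall a : X, continuous_top O (m a) /\ continuous_top O (fun x => m x a).

Definition discrete_family (X : Type) (O : set (set X)) (F : set (set X)) : Prop :=
  forall x : X, exists W, O W /\ W x /\
    forall U V, F U -> F V -> (exists y, W y /\ U y) -> (exists y, W y /\ V y) -> U = V.

Definition d_feebly_compact (X : Type) (O : set (set X)) : Prop :=
  forall F : set (set X), (forall U, F U -> O U) -> discrete_family O F -> finite_set F.

Definition dense_in (X : Type) (O : set (set X)) (D : set X) : Prop :=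
  forall U, O U -> (exists x, U x) -> exists x, U x /\ D x.

From HB Require Import structures.
From mathcomp Require Import all_boot.
From mathcomp Require Import finmap.
From mathcomp Require Import boolp classical_sets functions cardinality.
Set Implicit Arguments. Unset Strict Implicit. Unset Printing Implicit Defensive.
Local Open Scope fset_scope.

(* If a nonempty open set U contained only sets of size < n, pick x in U and,
   since lambda is infinite, a sequence of n-element sets y_i forming a
   Delta-system with kernel x.  Shift-continuity and T_1 make every
   {z : t \in z} open, so the maximal elements y_i are isolated points.  The
   singletons {y_i} form a discrete family: x is separated from them by U, a
   proper subset z of x by the preimage under (. `&` x) of a neighbourhood of
   z missing x, and a set containing some t \notin x by {w : t \in w}, which
   contains at most one y_i.  This contradicts d-feeble compactness. *)

Section Topology.
Variables (X : Type) (O : set (set X)).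
Hypothesis O_top : is_topology O.

Lemma open_bigI (T : eqType) (P : T -> set X) (s : seq T) :
  (forall t, O (P t)) -> O (fun x => forall t, t \in s -> P t x).
Proof.
have [OT [_ [_ OI]]] := O_top; move=> OP; elim: s => [|t s IHs].
  by rewrite (_ : (fun _ => _) = setT) //; apply: funext => x; apply: propext.
rewrite (_ : (fun x => _) = (fun x => P t x /\ forall u, u \in s -> P u x)).
  exact: OI (OP t) IHs.
apply: funext => x; apply: propext; split => [Px|[Ptx Psx] u].
  by split=> [|u us]; apply: Px; rewrite inE ?eqxx ?us ?orbT.
by rewrite inE => /predU1P[->|/Psx].
Qed.

Lemma open_neq : T1_top O -> forall a, O (fun x => x <> a).
Proof.
have [_ [_ [O_union _]]] := O_top; move=> O_T1 a.
rewrite (_ : (fun x => _) = (fun x => exists2 U, O U /\ ~ U a & U x)).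
  by apply: O_union => U [].
apply: funext => x; apply: propext; split => [xa|[U [_ Ua] Ux] xa].
  by have [U [OU [Ux Ua]]] := O_T1 x a xa; exists U.
by apply: Ua; rewrite -xa.
Qed.

Definition discrete_seq (y : nat -> X) : Prop :=
  forall x, exists W, [/\ O W, W x & forall i j, W (y i) -> W (y j) -> i = j].

Lemma isolated_discrete_seq_not_d_feebly_compact (y : nat -> X) :
  d_feebly_compact O -> (forall i, O (fun x => x = y i)) -> ~ discrete_seq y.
Proof.
move=> O_dfc Oy ydisc.
pose F U := exists i, U = (fun x => x = y i).
have finF : finite_set F.
  apply: O_dfc => [_ [i ->] // | x].
  have [W [OW Wx Wy]] := ydisc x; exists W; split=> //; split=> //.
  move=> _ _ [i ->] [j ->] [z [Wz /= zi]] [z' [Wz' /= z'j]].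
  by rewrite (Wy i j) -?zi -?z'j.
have yinj : injective y.
  by move=> i j yij; have [W [_ Wyi Wy]] := ydisc (y i); apply: Wy; rewrite -?yij.
have pt_inj : injective (fun i x => x = y i).
  by move=> i j /(congr1 (fun U => U (y i))) yij; apply: yinj; rewrite -yij.
apply: infinite_nat.
have := finite_preimage (in2W pt_inj) finF.
suff -> : preimage (fun i x => x = y i) F = setT by [].
by apply: funext => i; apply: propext; split => // _; exists i.
Qed.

End Topology.

Lemma inj_countable_notin (J : countType) (T : choiceType) (A : {fset T}) :
  ~ finite_set [set: T] -> exists2 f : J -> T, injective f & forall i, f i \notin A.
Proof.
elim/choicePpointed: T => T in A *; first by rewrite emptyE.
move=> /infinite_setD/(_ (finite_fset A))/infiniteP.
move=> /(card_le_trans (countableP [set: J]))/pcard_leP[f].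
exists (f : J -> T) => [i j|i]; first by apply: inj; rewrite in_setT.
have [_ fiA] := @funS _ _ _ _ f i I.
by apply/negP.
Qed.

Definition delta_system (T : choiceType) (A : {fset T}) (Y : nat -> {fset T}) :=
  (forall i, A `<=` Y i) /\ (forall i j t, t \in Y i -> t \in Y j -> t \notin A -> i = j).

Lemma exists_delta_system (T : choiceType) (A : {fset T}) (k : nat) :
  ~ finite_set [set: T] ->
  exists Y, delta_system A Y /\ forall i, #|` Y i| = (#|` A| + k)%N.
Proof.
move=> /(inj_countable_notin (nat * nat)%type A)[f finj fA].
pose petal (i : nat) := [fset f (i, j) | j in iota 0 k].
exists (fun i => A `|` petal i); split; first split.
- by move=> i; exact: fsubsetUl.
- move=> i j t + + tA; rewrite !inE (negbTE tA) /=.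
  by move=> /imfsetP[a _ ->] /imfsetP[b _ /finj[]].
move=> i; have /eqP AIpetal : [disjoint A & petal i].
  apply/fdisjointP => t tA; apply/imfsetP => -[a _ tE].
  by rewrite tE (negbTE (fA _)) in tA.
rewrite cardfsU AIpetal cardfs0 subn0 card_imfset /= ?undup_id ?iota_uniq ?size_iota //.
by move=> a b /finj[].
Qed.

Section ExpTopology.
Variables (L : choiceType) (n : nat) (O : set (set (exp_set L n))).
Hypotheses (n_gt0 : (0 < n)%N) (O_top : is_topology O) (O_T1 : T1_top O).
Hypothesis O_shift : shift_continuous (@exp_meet L n) O.

Lemma open_mem (t : L) : O (fun z => t \in val z).
Proof.
have t_le_n : (#|` [fset t]| <= n)%N by rewrite cardfs1.
have fset0_le_n : (#|` (fset0 : {fset L})| <= n)%N by rewrite cardfs0.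
pose single : exp_set L n := exist _ [fset t] t_le_n.
pose empty : exp_set L n := exist _ fset0 fset0_le_n.
have := (O_shift single).1 _ (open_neq O_top O_T1 empty).
congr O; apply: funext => z; apply: propext; split => [tz0|tz].
  apply: contra_notT tz0 => tNz; apply: val_inj.
  by rewrite /= fsetIC fsetI1 (negbTE tNz).
by move=> /(congr1 val) /fsetP /(_ t); rewrite /= fsetIC fsetI1 tz !inE eqxx.
Qed.

Lemma open_fsupset (y : exp_set L n) : O (fun z => val y `<=` val z).
Proof.
have := open_bigI O_top (val y) open_mem.
congr O; apply: funext => z; apply: propext.
by split => [yz|/fsubsetP //]; apply/fsubsetP.
Qed.

Lemma open_maximal_point (y : exp_set L n) : #|` val y| = n -> O (fun z => z = y).
Proof.
move=> yn; have := open_fsupset y; congr O; apply: funext => z; apply: propext.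
split => [yz|->]; last exact: fsubset_refl.
by apply/val_inj/esym/eqP; rewrite eqEfcard yz yn; exact: (proj2_sig z).
Qed.

Lemma delta_system_discrete_seq (x : exp_set L n) (y : nat -> exp_set L n) :
  delta_system (val x) (fun i => val (y i)) ->
  (exists U, [/\ O U, U x & forall i, ~ U (y i)]) -> discrete_seq O y.
Proof.
move=> [x_sub petals] [U [OU Ux Uy]] z.
have [zx|/fsubsetPn[t tz tNx]] := boolP (val z `<=` val x); last first.
  exists (fun w => t \in val w); split=> // [|i j ti tj]; first exact: open_mem.
  exact: petals ti tj tNx.
have [->|/eqP zNx] := eqVneq z x; first by exists U; split=> // i j /Uy.
have [V [OV [Vz Vx]]] := O_T1 zNx.
exists (fun w => V (exp_meet w x)); split; first exact: (O_shift x).2.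
  by rewrite (_ : exp_meet z x = z) //; apply/val_inj/fsetIidPl.
have yIx i : exp_meet (y i) x = x by apply/val_inj/fsetIidPr/x_sub.
by move=> i j; rewrite yIx.
Qed.

End ExpTopology.

Theorem proposition2 (L : choiceType) (n : nat) (O : set (set (exp_set L n))) :
  (0 < n)%N ->
  ~ finite_set (setT : set L) ->
  is_topology O -> T1_top O -> shift_continuous (@exp_meet L n) O ->
  d_feebly_compact O ->
  dense_in O (fun A : exp_set L n => #|` val A|%fset = n).
Proof.
move=> n_gt0 L_inf O_top O_T1 O_shift O_dfc U OU [x Ux].
apply: contrapT => noFull.
have x_lt_n : (#|` val x| < n)%N.
  rewrite ltn_neqAle (proj2_sig x) andbT; apply/eqP => xn.
  by apply: noFull; exists x.
have [Y [Y_delta Y_card]] := exists_delta_system (val x) (n - #|` val x|) L_inf.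
have Yn i : #|` Y i| = n by rewrite Y_card subnKC // ltnW.
pose y i : exp_set L n := exist _ (Y i) (eq_leq (Yn i)).
apply: (isolated_discrete_seq_not_d_feebly_compact O_dfc (y := y)).
  by move=> i; exact: (@open_maximal_point L n O n_gt0 O_top O_T1 O_shift (y i) (Yn i)).
apply: (@delta_system_discrete_seq L n O n_gt0 O_top O_T1 O_shift x y Y_delta).
exists U; split=> // i Uyi; apply: noFull.
by exists (y i); split; last exact: Yn.
Qed.
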